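(* Let $n\geq1$ and, on the second jet space $J^2(n,1)$ with coordinates $(x^i,u,u_i,u_{ij})$, let $U=(u_{ij})$ be the (symmetric) matrix of second-order coordinates and $U_k$ its upper-left $k\times k$ submatrix. Then the second-order PDEs $\{\det U_k=0\}$, $k=1,\dots,n$, are all locally contactomorphic to each other, i.e. for any $k,l$ there is a local contact transformation of $J^1(n,1)$ whose prolongation to $J^2(n,1)$ maps $\{\det U_k=0\}$ onto $\{\det U_l=0\}$. (In particular, for $n=2$, $u_{11}u_{22}-u_{12}^2=0$ and $u_{11}=0$ are contactomorphic.)
   Context: $J^1(n,1)$ has coordinates $(x^i,u,u_i)$ and contact distribution $\ker(du-u_idx^i)$; $J^2(n,1)$ is identified (locally) with the bundle of Lagrangian planes of this contact distribution, the point $(x^i,u,u_i,u_{ij})$ corresponding to the plane $\langle \partial_{x^i}+u_i\partial_u+u_{ij}\partial_{u_j}\rangle$. A contact transformation $\phi$ prolongs to $J^2(n,1)$ by $L\mapsto d\phi(L)$. *)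

From Stdlib Require Import Reals Arith List.
Import ListNotations.
Open Scope R_scope.

(** Vectors of R^m are represented by [nat -> R]; only indices < m matter. *)

Fixpoint sumR (m : nat) (f : nat -> R) : R :=
  match m with
  | O => 0
  | S m' => sumR m' f + f m'
  end.

Definition eqv (m : nat) (x y : nat -> R) : Prop :=
  forall a, (a < m)%nat -> x a = y a.

Definition open_in (m : nat) (O : (nat -> R) -> Prop) : Prop :=
  forall x, O x -> exists eps, 0 < eps /\
    forall y, (forall a, (a < m)%nat -> Rabs (y a - x a) < eps) -> O y.

Definition continuous_at_in (m : nat) (f : (nat -> R) -> R) (x : nat -> R) : Prop :=
  forall eps, 0 < eps -> exists delta, 0 < delta /\
    forall y, (forall a, (a < m)%nat -> Rabs (y a - x a) < delta) ->
      Rabs (f y - f x) < eps.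

Definition upd (x : nat -> R) (i : nat) (r : R) : nat -> R :=
  fun j => if Nat.eqb j i then r else x j.

Definition is_partial (f : (nat -> R) -> R) (i : nat) (x : nat -> R) (l : R) : Prop :=
  derivable_pt_lim (fun t => f (upd x i (x i + t))) 0 l.

(** f is C^infinity on the open set O of R^m: all iterated partial
    derivatives D s (s = list of directions, head = last derivative taken)
    exist and are continuous on O. *)
Definition smooth_fun (m : nat) (O : (nat -> R) -> Prop) (f : (nat -> R) -> R) : Prop :=
  exists D : list nat -> (nat -> R) -> R,
    (forall x, O x -> D nil x = f x) /\
    (forall s x, O x ->
       continuous_at_in m (D s) x /\
       forall i, (i < m)%nat -> is_partial (D s) i x (D (cons i s) x)).

Definition smooth_map (m k : nat) (O : (nat -> R) -> Prop)
  (phi : (nat -> R) -> (nat -> R)) : Prop :=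
  forall j, (j < k)%nat -> smooth_fun m O (fun z => phi z j).

Definition dmap (m k : nat) (phi : (nat -> R) -> (nat -> R)) (z v w : nat -> R) : Prop :=
  forall j, (j < k)%nat -> exists J : nat -> R,
    (forall a, (a < m)%nat -> is_partial (fun y => phi y j) a z (J a)) /\
    w j = sumR m (fun a => J a * v a).

(** Coordinates on J^1(n,1) = R^(2n+1):
    x^i = z i (i < n), u = z n, u_i = z (n+1+i) (i < n). *)
Definition dimJ1 (n : nat) : nat := (2 * n + 1)%nat.

Definition theta (n : nat) (z v : nat -> R) : R :=
  v n - sumR n (fun i => z (n + 1 + i)%nat * v i).

Definition local_contact (n : nat) (O : (nat -> R) -> Prop)
  (phi : (nat -> R) -> (nat -> R)) : Prop :=
  open_in (dimJ1 n) O /\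
  smooth_map (dimJ1 n) (dimJ1 n) O phi /\
  (exists (O' : (nat -> R) -> Prop) (psi : (nat -> R) -> (nat -> R)),
     open_in (dimJ1 n) O' /\ smooth_map (dimJ1 n) (dimJ1 n) O' psi /\
     (forall z, O z -> O' (phi z) /\ eqv (dimJ1 n) (psi (phi z)) z) /\
     (forall w, O' w -> O (psi w) /\ eqv (dimJ1 n) (phi (psi w)) w)) /\
  (forall z v w, O z -> theta n z v = 0 -> dmap (dimJ1 n) (dimJ1 n) phi z v w ->
     theta n (phi z) w = 0).

(** Points of J^2(n,1): (z, U) with U = (u_ij) symmetric n x n. *)
Definition J2pt : Type := ((nat -> R) * (nat -> nat -> R))%type.

Definition sym (n : nat) (U : nat -> nat -> R) : Prop :=
  forall i j, (i < n)%nat -> (j < n)%nat -> U i j = U j i.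

(** E_i = d/dx^i + u_i d/du + u_ij d/du_j : spanning vectors of the Lagrangian
    plane associated with the point (z, U) *)
Definition Evec (n : nat) (z : nat -> R) (U : nat -> nat -> R) (i : nat) : nat -> R :=
  fun a =>
    if (a <? n)%nat then (if Nat.eqb a i then 1 else 0)
    else if Nat.eqb a n then z (n + 1 + i)%nat
    else if (a <? 2 * n + 1)%nat then U i (a - (n + 1))%nat
    else 0.

Definition span_eq (m k : nat) (A B : nat -> nat -> R) : Prop :=
  (forall i, (i < k)%nat -> exists c : nat -> R,
      forall a, (a < m)%nat -> A i a = sumR k (fun j => c j * B j a)) /\
  (forall i, (i < k)%nat -> exists c : nat -> R,
      forall a, (a < m)%nat -> B i a = sumR k (fun j => c j * A j a)).

(** prolongation phi^(1) : L |-> dphi(L), as a relation P |-> P' *)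
Definition prolong (n : nat) (phi : (nat -> R) -> (nat -> R)) (P P' : J2pt) : Prop :=
  sym n (snd P') /\ eqv (dimJ1 n) (fst P') (phi (fst P)) /\
  exists A : nat -> nat -> R,
    (forall i, (i < n)%nat ->
       dmap (dimJ1 n) (dimJ1 n) phi (fst P) (Evec n (fst P) (snd P) i) (A i)) /\
    span_eq (dimJ1 n) n A (Evec n (fst P') (snd P')).

Definition open_J2 (n : nat) (W : J2pt -> Prop) : Prop :=
  forall P, W P -> sym n (snd P) /\ exists eps, 0 < eps /\
    forall Q : J2pt, sym n (snd Q) ->
      (forall a, (a < dimJ1 n)%nat -> Rabs (fst Q a - fst P a) < eps) ->
      (forall i j, (i < n)%nat -> (j < n)%nat -> Rabs (snd Q i j - snd P i j) < eps) ->
      W Q.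

Definition minor (M : nat -> nat -> R) (j : nat) : nat -> nat -> R :=
  fun r c => M (S r) (if (c <? j)%nat then c else S c).

Fixpoint detk (k : nat) (M : nat -> nat -> R) : R :=
  match k with
  | O => 1
  | S k' => sumR (S k') (fun j => (-1) ^ j * M O j * detk k' (minor M j))
  end.

(* The partial Legendre transformation that exchanges x^j and u_j (up to sign) for the
   indices j between k and l is a contact transformation. Its prolongation maps the
   Lagrangian plane spanned by the rows of (1, U) to the plane spanned by the rows of
   (M, N), obtained from (1, U) by exchanging these columns (with a sign), so the new
   second-order coordinates are U' = M^-1 N; near U = diag(1 on the exchanged indices)
   the matrix M is invertible. Finally det U_k = 0 iff the plane contains a nonzero vector
   (a, b) with a supported in [0, k) and b vanishing on [0, k), and exchanging
   (a_j, b_j) with (b_j, - a_j) for j between k and l turns this condition into the same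
   condition for l. *)

From Stdlib Require Import Reals Arith Lia Lra List FunctionalExtensionality.
From mathcomp Require ssreflect all_boot all_algebra Rstruct.
Open Scope R_scope.
Set Bullet Behavior "Strict Subproofs".

Definition kron (i j : nat) : R := if Nat.eqb i j then 1 else 0.

Lemma kron_sym i j : kron i j = kron j i.
Proof. unfold kron. now rewrite Nat.eqb_sym. Qed.

Lemma sumR_ext m f g : (forall a, (a < m)%nat -> f a = g a) -> sumR m f = sumR m g.
Proof.
  induction m as [|m IH]; intros H; simpl; [reflexivity|].
  rewrite IH, H by (lia || intros; apply H; lia). reflexivity.
Qed.

Lemma sumR_0 m : sumR m (fun _ => 0) = 0.
Proof. induction m; simpl; lra. Qed.

Lemma sumR_add m f g : sumR m (fun a => f a + g a) = sumR m f + sumR m g.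
Proof. induction m; simpl; lra. Qed.

Lemma sumR_opp m f : sumR m (fun a => - f a) = - sumR m f.
Proof. induction m; simpl; lra. Qed.

Lemma sumR_mull m c f : sumR m (fun a => c * f a) = c * sumR m f.
Proof. induction m; simpl; [ring|]. rewrite IHm. ring. Qed.

Lemma sumR_mulr m c f : sumR m (fun a => f a * c) = sumR m f * c.
Proof. induction m; simpl; [ring|]. rewrite IHm. ring. Qed.

Lemma sumR_swap m p (f : nat -> nat -> R) :
  sumR m (fun a => sumR p (fun b => f a b)) = sumR p (fun b => sumR m (fun a => f a b)).
Proof.
  induction m; simpl; [now rewrite sumR_0|]. rewrite IHm, <- sumR_add. reflexivity.
Qed.

Lemma sumR_kron_l m b f : (b < m)%nat -> sumR m (fun a => kron b a * f a) = f b.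
Proof.
  induction m as [|m IH]; intros Hb; [lia|]. simpl. unfold kron at 2.
  destruct (Nat.eqb_spec b m) as [->|Hbm].
  - rewrite (sumR_ext _ _ (fun _ => 0)), sumR_0; [ring|].
    intros a Ha. unfold kron. rewrite (proj2 (Nat.eqb_neq m a)) by lia. ring.
  - rewrite IH by lia. ring.
Qed.

Lemma sumR_kron_r m b f : (b < m)%nat -> sumR m (fun a => f a * kron a b) = f b.
Proof.
  intros Hb. rewrite <- (sumR_kron_l m b f Hb). apply sumR_ext. intros a _.
  rewrite kron_sym. ring.
Qed.

Lemma sumR_le m f g : (forall a, (a < m)%nat -> f a <= g a) -> sumR m f <= sumR m g.
Proof.
  induction m as [|m IH]; intros H; simpl; [lra|].
  pose proof (H m ltac:(lia)). pose proof (IH ltac:(intros; apply H; lia)). lra.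
Qed.

Lemma sumR_nonneg m f : (forall a, (a < m)%nat -> 0 <= f a) -> 0 <= sumR m f.
Proof. intros H. rewrite <- (sumR_0 m). now apply sumR_le. Qed.

Lemma sumR_term_le m f b :
  (forall a, (a < m)%nat -> 0 <= f a) -> (b < m)%nat -> f b <= sumR m f.
Proof.
  induction m as [|m IH]; intros H Hb; [lia|]. simpl.
  pose proof (sumR_nonneg m f ltac:(intros; apply H; lia)).
  destruct (Nat.eq_dec b m) as [->|Hbm]; [lra|].
  pose proof (IH ltac:(intros; apply H; lia) ltac:(lia)). pose proof (H m ltac:(lia)). lra.
Qed.

Lemma sumR_abs m f : Rabs (sumR m f) <= sumR m (fun a => Rabs (f a)).
Proof.
  induction m; simpl; [rewrite Rabs_R0; lra|].
  eapply Rle_trans; [apply Rabs_triang|]. lra.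
Qed.

Lemma sumR_le_const m f c : (forall a, (a < m)%nat -> f a <= c) -> sumR m f <= INR m * c.
Proof.
  induction m as [|m IH]; intros H; [simpl; lra|].
  pose proof (H m ltac:(lia)). pose proof (IH ltac:(intros; apply H; lia)).
  rewrite S_INR. simpl. lra.
Qed.

Lemma sumR_truncate n k g :
  (k <= n)%nat -> (forall i, (k <= i < n)%nat -> g i = 0) -> sumR n g = sumR k g.
Proof.
  induction n as [|n IH]; intros Hk H; [now replace k with 0%nat by lia|].
  destruct (Nat.eq_dec k (S n)) as [->|Hkn]; [reflexivity|].
  simpl. rewrite H, IH by (lia || intros; apply H; lia). ring.
Qed.

Lemma exists_argmax n (g : nat -> R) :
  (0 < n)%nat -> exists b, (b < n)%nat /\ forall a, (a < n)%nat -> g a <= g b.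
Proof.
  induction n as [|n IH]; intros Hn; [lia|]. destruct (Nat.eq_dec n 0) as [->|Hn0].
  - exists 0%nat. split; [lia|]. intros a Ha. replace a with 0%nat by lia. lra.
  - destruct (IH ltac:(lia)) as [b [Hb Hmax]]. destruct (Rle_dec (g n) (g b)).
    + exists b. split; [lia|]. intros a Ha.
      destruct (Nat.eq_dec a n) as [->|]; [lra|]. apply Hmax; lia.
    + exists n. split; [lia|]. intros a Ha.
      destruct (Nat.eq_dec a n) as [->|]; [lra|]. pose proof (Hmax a ltac:(lia)). lra.
Qed.

Definition vmul (m : nat) (c : nat -> R) (A : nat -> nat -> R) (j : nat) : R :=
  sumR m (fun i => c i * A i j).

Lemma vmul_ext m c c' A A' j :
  (forall i, (i < m)%nat -> c i = c' i /\ A i j = A' i j) -> vmul m c A j = vmul m c' A' j.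
Proof. intros H. apply sumR_ext. intros i Hi. destruct (H i Hi) as [-> ->]. reflexivity. Qed.

Lemma vmul_assoc m c A B j :
  vmul m (vmul m c A) B j = vmul m c (fun i => vmul m (A i) B) j.
Proof.
  unfold vmul. rewrite (sumR_ext m _ (fun p => sumR m (fun i => c i * A i p * B p j)))
    by (intros; rewrite <- sumR_mulr; reflexivity).
  rewrite sumR_swap. apply sumR_ext. intros i _. rewrite <- sumR_mull.
  apply sumR_ext. intros; ring.
Qed.

Lemma vmul_kron m i A j : (i < m)%nat -> vmul m (kron i) A j = A i j.
Proof. exact (sumR_kron_l m i (fun a => A a j)). Qed.

Lemma continuous_at_const m c x : continuous_at_in m (fun _ => c) x.
Proof. intros e He. exists 1. split; [lra|]. intros y _. rewrite Rminus_diag, Rabs_R0. lra. Qed.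

Lemma continuous_at_coord m a x : (a < m)%nat -> continuous_at_in m (fun y => y a) x.
Proof. intros Ha e He. exists e. split; [lra|]. intros y Hy. now apply Hy. Qed.

Lemma continuous_at_add m f g x :
  continuous_at_in m f x -> continuous_at_in m g x -> continuous_at_in m (fun y => f y + g y) x.
Proof.
  intros Hf Hg e He.
  destruct (Hf (e / 2) ltac:(lra)) as [d1 [Hd1 H1]].
  destruct (Hg (e / 2) ltac:(lra)) as [d2 [Hd2 H2]].
  exists (Rmin d1 d2). split; [now apply Rmin_pos|]. intros y Hy.
  specialize (H1 y (fun a Ha => Rlt_le_trans _ _ _ (Hy a Ha) (Rmin_l _ _))).
  specialize (H2 y (fun a Ha => Rlt_le_trans _ _ _ (Hy a Ha) (Rmin_r _ _))).
  replace (f y + g y - (f x + g x)) with ((f y - f x) + (g y - g x)) by ring.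
  eapply Rle_lt_trans; [apply Rabs_triang|]. lra.
Qed.

Lemma continuous_at_mul m f g x :
  continuous_at_in m f x -> continuous_at_in m g x -> continuous_at_in m (fun y => f y * g y) x.
Proof.
  intros Hf Hg e He.
  set (K := Rabs (f x) + Rabs (g x) + 1).
  assert (HK : 1 <= K) by (unfold K; pose proof (Rabs_pos (f x)); pose proof (Rabs_pos (g x)); lra).
  set (e1 := Rmin 1 (e / (3 * K))).
  assert (He1 : 0 < e1) by (apply Rmin_pos; [lra | apply Rdiv_lt_0_compat; lra]).
  assert (He1K : e1 * K <= e / 3).
  { replace (e / 3) with (e / (3 * K) * K) by (field; lra).
    apply Rmult_le_compat_r; [lra | apply Rmin_r]. }
  destruct (Hf e1 He1) as [d1 [Hd1 H1]]. destruct (Hg e1 He1) as [d2 [Hd2 H2]].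
  exists (Rmin d1 d2). split; [now apply Rmin_pos|]. intros y Hy.
  specialize (H1 y (fun a Ha => Rlt_le_trans _ _ _ (Hy a Ha) (Rmin_l _ _))).
  specialize (H2 y (fun a Ha => Rlt_le_trans _ _ _ (Hy a Ha) (Rmin_r _ _))).
  (* each of the three terms is at most e1 * K <= e / 3 *)
  replace (f y * g y - f x * g x)
    with ((f y - f x) * (g y - g x) + (f y - f x) * g x + f x * (g y - g x)) by ring.
  assert (e1 <= 1) by apply Rmin_l.
  pose proof (Rabs_pos (f y - f x)). pose proof (Rabs_pos (g y - g x)).
  pose proof (Rabs_pos (f x)). pose proof (Rabs_pos (g x)).
  assert (Rabs (f y - f x) * Rabs (g y - g x) <= e1 * K)
    by (apply Rmult_le_compat; unfold K; lra).
  assert (Rabs (f y - f x) * Rabs (g x) <= e1 * K)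
    by (apply Rmult_le_compat; unfold K; lra).
  assert (Rabs (f x) * Rabs (g y - g x) <= K * e1)
    by (apply Rmult_le_compat; unfold K; lra).
  eapply Rle_lt_trans; [apply Rabs_triang|]. rewrite Rabs_mult.
  eapply Rle_lt_trans; [apply Rplus_le_compat_r, Rabs_triang|]. rewrite !Rabs_mult. nra.
Qed.

Lemma is_partial_ext f g i x l : (forall y, f y = g y) -> is_partial g i x l -> is_partial f i x l.
Proof. intros H. replace f with g; [auto|]. apply functional_extensionality. auto. Qed.

Lemma is_partial_const c i x : is_partial (fun _ => c) i x 0.
Proof. apply derivable_pt_lim_const. Qed.

Lemma is_partial_coord a i x : is_partial (fun y => y a) i x (kron i a).
Proof.
  unfold is_partial, upd, kron. rewrite (Nat.eqb_sym i a). destruct (Nat.eqb a i).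
  - replace 1 with (0 + 1) by ring.
    apply (derivable_pt_lim_plus (fct_cte (x i)) id). apply derivable_pt_lim_const.
    apply derivable_pt_lim_id.
  - apply derivable_pt_lim_const.
Qed.

Lemma is_partial_add f g i x l1 l2 :
  is_partial f i x l1 -> is_partial g i x l2 -> is_partial (fun y => f y + g y) i x (l1 + l2).
Proof. apply derivable_pt_lim_plus. Qed.

Lemma is_partial_mul f g i x l1 l2 : is_partial f i x l1 -> is_partial g i x l2 ->
  is_partial (fun y => f y * g y) i x (l1 * g x + f x * l2).
Proof.
  intros H1 H2. pose proof (derivable_pt_lim_mult _ _ _ _ _ H1 H2) as H.
  unfold mult_fct in H. simpl in H.
  replace (upd x i (x i + 0)) with x in H; [exact H|].
  apply functional_extensionality. intros j. unfold upd.
  destruct (Nat.eqb_spec j i) as [->|]; [ring | reflexivity].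
Qed.

Lemma is_partial_opp f i x l : is_partial f i x l -> is_partial (fun y => - f y) i x (- l).
Proof. apply derivable_pt_lim_opp. Qed.

Lemma smooth_fun_ext m O f g : (forall x, f x = g x) -> smooth_fun m O g -> smooth_fun m O f.
Proof. intros H [D [H0 HD]]. exists D. split; [|exact HD]. intros x Hx. rewrite H0, H; auto. Qed.

Lemma smooth_fun_const m O c : smooth_fun m O (fun _ => c).
Proof.
  exists (fun s _ => match s with nil => c | _ => 0 end). split; [reflexivity|].
  intros s x _. destruct s; split; auto using continuous_at_const, is_partial_const.
Qed.

Lemma smooth_fun_coord m O a : (a < m)%nat -> smooth_fun m O (fun z => z a).
Proof.
  intros Ha. exists (fun s z => match s with nil => z a | i :: nil => kron i a | _ => 0 end).
  split; [reflexivity|]. intros s x _.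
  destruct s as [|j [|k s]]; split;
    auto using continuous_at_coord, continuous_at_const, is_partial_coord, is_partial_const.
Qed.

Lemma smooth_fun_coord_mul m O a b :
  (a < m)%nat -> (b < m)%nat -> smooth_fun m O (fun z => z a * z b).
Proof.
  intros Ha Hb.
  exists (fun s z => match s with
                     | nil => z a * z b
                     | i :: nil => kron i a * z b + z a * kron i b
                     | j :: i :: nil => kron i a * kron j b + kron j a * kron i b
                     | _ => 0 end).
  split; [reflexivity|]. intros s x _. destruct s as [|j [|k [|p s]]]; split.
  - apply continuous_at_mul; now apply continuous_at_coord.
  - intros i _. apply is_partial_mul; apply is_partial_coord.
  - apply continuous_at_add; apply continuous_at_mul;
      auto using continuous_at_const, continuous_at_coord.
  - intros i _. eapply is_partial_ext; [reflexivity|].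
    replace (kron j a * kron i b + kron i a * kron j b)
      with ((0 * x b + kron j a * kron i b) + (kron i a * kron j b + x a * 0)) by ring.
    apply is_partial_add; apply is_partial_mul;
      auto using is_partial_const, is_partial_coord.
  - apply continuous_at_const.
  - intros; apply is_partial_const.
  - apply continuous_at_const.
  - intros; apply is_partial_const.
Qed.

Lemma smooth_fun_add m O f g :
  smooth_fun m O f -> smooth_fun m O g -> smooth_fun m O (fun z => f z + g z).
Proof.
  intros [D1 [H10 H1]] [D2 [H20 H2]]. exists (fun s z => D1 s z + D2 s z). split.
  - intros x Hx. now rewrite H10, H20.
  - intros s x Hx. destruct (H1 s x Hx) as [C1 P1], (H2 s x Hx) as [C2 P2].
    split; [now apply continuous_at_add|]. intros i Hi. apply is_partial_add; auto.
Qed.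

Lemma smooth_fun_scale m O c f : smooth_fun m O f -> smooth_fun m O (fun z => c * f z).
Proof.
  intros [D [H0 HD]]. exists (fun s z => c * D s z). split.
  - intros x Hx. now rewrite H0.
  - intros s x Hx. destruct (HD s x Hx) as [C P]. split.
    + apply continuous_at_mul; auto using continuous_at_const.
    + intros i Hi. replace (c * D (i :: s) x) with (0 * D s x + c * D (i :: s) x) by ring.
      apply is_partial_mul; auto using is_partial_const.
Qed.

Lemma smooth_fun_sumR m O N F : (forall j, (j < N)%nat -> smooth_fun m O (F j)) ->
  smooth_fun m O (fun z => sumR N (fun j => F j z)).
Proof.
  induction N as [|N IH]; intros H; simpl; [apply smooth_fun_const|].
  apply smooth_fun_add; [apply IH; intros; apply H; lia | apply H; lia].
Qed.

Definition dderiv (m : nat) (f : (nat -> R) -> R) (z v : nat -> R) (l : R) : Prop :=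
  exists J : nat -> R,
    (forall a, (a < m)%nat -> is_partial f a z (J a)) /\ l = sumR m (fun a => J a * v a).

Lemma dmap_dderiv m k phi z v w :
  dmap m k phi z v w <-> forall j, (j < k)%nat -> dderiv m (fun y => phi y j) z v (w j).
Proof. reflexivity. Qed.

Lemma dderiv_unique m f z v l l' : dderiv m f z v l -> dderiv m f z v l' -> l = l'.
Proof.
  intros [J [HJ ->]] [J' [HJ' ->]]. apply sumR_ext. intros a Ha.
  f_equal. exact (uniqueness_limite _ _ _ _ (HJ a Ha) (HJ' a Ha)).
Qed.

Lemma dderiv_ext m f g z v l : (forall y, f y = g y) -> dderiv m g z v l -> dderiv m f z v l.
Proof. intros H [J [HJ Hl]]. exists J. split; [|exact Hl]. intros a Ha. eauto using is_partial_ext. Qed.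

Lemma dderiv_const m c z v : dderiv m (fun _ => c) z v 0.
Proof.
  exists (fun _ => 0). split; [intros; apply is_partial_const|].
  rewrite (sumR_ext _ _ (fun _ => 0)), sumR_0; [reflexivity|]. intros; ring.
Qed.

Lemma dderiv_coord m c z v : (c < m)%nat -> dderiv m (fun y => y c) z v (v c).
Proof.
  intros Hc. exists (fun a => kron a c). split; [intros; apply is_partial_coord|].
  rewrite <- (sumR_kron_r m c v Hc). apply sumR_ext. intros; ring.
Qed.

Lemma dderiv_add m f g z v l1 l2 :
  dderiv m f z v l1 -> dderiv m g z v l2 -> dderiv m (fun y => f y + g y) z v (l1 + l2).
Proof.
  intros [J1 [H1 ->]] [J2 [H2 ->]]. exists (fun a => J1 a + J2 a). split.
  - intros a Ha. apply is_partial_add; auto.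
  - rewrite <- sumR_add. apply sumR_ext. intros; ring.
Qed.

Lemma dderiv_mul m f g z v l1 l2 : dderiv m f z v l1 -> dderiv m g z v l2 ->
  dderiv m (fun y => f y * g y) z v (l1 * g z + f z * l2).
Proof.
  intros [J1 [H1 ->]] [J2 [H2 ->]]. exists (fun a => J1 a * g z + f z * J2 a). split.
  - intros a Ha. apply is_partial_mul; auto.
  - rewrite <- sumR_mulr, <- sumR_mull, <- sumR_add. apply sumR_ext. intros; ring.
Qed.

Lemma dderiv_opp m f z v l : dderiv m f z v l -> dderiv m (fun y => - f y) z v (- l).
Proof.
  intros [J [H ->]]. exists (fun a => - J a). split.
  - intros a Ha. apply is_partial_opp; auto.
  - rewrite <- sumR_opp. apply sumR_ext. intros; ring.
Qed.

Lemma dderiv_sumR m N F z v L : (forall j, (j < N)%nat -> dderiv m (F j) z v (L j)) ->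
  dderiv m (fun y => sumR N (fun j => F j y)) z v (sumR N L).
Proof.
  induction N as [|N IH]; intros H; simpl; [apply dderiv_const|].
  apply dderiv_add; [apply IH; intros; apply H; lia | apply H; lia].
Qed.

Lemma dmap_unique m k phi z v w w' :
  dmap m k phi z v w -> dmap m k phi z v w' -> eqv k w w'.
Proof. intros H H' j Hj. exact (dderiv_unique _ _ _ _ _ _ (H j Hj) (H' j Hj)). Qed.

(** The vector with coordinates [x = X], [u], [u_i = P]; indices beyond [2n] are junk. *)
Definition J1pt (n : nat) (X : nat -> R) (u : R) (P : nat -> R) (a : nat) : R :=
  if (a <? n)%nat then X a else if Nat.eqb a n then u else P (a - (n + 1))%nat.

Lemma J1pt_x n X u P j : (j < n)%nat -> J1pt n X u P j = X j.
Proof. intros Hj. unfold J1pt. now rewrite (proj2 (Nat.ltb_lt j n) Hj). Qed.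

Lemma J1pt_u n X u P : J1pt n X u P n = u.
Proof. unfold J1pt. now rewrite Nat.ltb_irrefl, Nat.eqb_refl. Qed.

Lemma J1pt_p n X u P j : J1pt n X u P (n + 1 + j) = P j.
Proof.
  unfold J1pt. rewrite (proj2 (Nat.ltb_ge (n + 1 + j) n)), (proj2 (Nat.eqb_neq (n + 1 + j) n)) by lia.
  f_equal. lia.
Qed.

Lemma J1_index_ind n (Q : nat -> Prop) :
  (forall j, (j < n)%nat -> Q j) -> Q n -> (forall j, (j < n)%nat -> Q (n + 1 + j)%nat) ->
  forall a, (a < dimJ1 n)%nat -> Q a.
Proof.
  unfold dimJ1. intros Hx Hu Hp a Ha. destruct (lt_dec a n) as [|Hna]; [auto|].
  destruct (Nat.eq_dec a n) as [->|]; [exact Hu|].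
  replace a with (n + 1 + (a - (n + 1)))%nat by lia. apply Hp. lia.
Qed.

Lemma eqv_J1pt n w X u P :
  eqv (dimJ1 n) w (J1pt n X u P) <->
  (forall j, (j < n)%nat -> w j = X j) /\ w n = u /\
  (forall j, (j < n)%nat -> w (n + 1 + j)%nat = P j).
Proof.
  split.
  - intros H. unfold dimJ1 in H. repeat split.
    + intros j Hj. rewrite (H j) by lia. now apply J1pt_x.
    + rewrite (H n) by lia. apply J1pt_u.
    + intros j Hj. rewrite (H (n + 1 + j)%nat) by lia. apply J1pt_p.
  - intros (Hx & Hu & Hp). red. apply (J1_index_ind n (fun a => w a = J1pt n X u P a)).
    + intros j Hj. rewrite J1pt_x; auto.
    + now rewrite J1pt_u.
    + intros j Hj. rewrite J1pt_p; auto.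
Qed.

Lemma smooth_map_J1pt n O (X : (nat -> R) -> nat -> R) u P :
  (forall j, (j < n)%nat -> smooth_fun (dimJ1 n) O (fun z => X z j)) ->
  smooth_fun (dimJ1 n) O u ->
  (forall j, (j < n)%nat -> smooth_fun (dimJ1 n) O (fun z => P z j)) ->
  smooth_map (dimJ1 n) (dimJ1 n) O (fun z => J1pt n (X z) (u z) (P z)).
Proof.
  intros Hx Hu Hp. red.
  apply (J1_index_ind n (fun a => smooth_fun _ O (fun z => J1pt n (X z) (u z) (P z) a))).
  - intros j Hj. apply (smooth_fun_ext _ _ _ (fun z => X z j)); [intros z; now apply J1pt_x | auto].
  - apply (smooth_fun_ext _ _ _ u); [intros z; apply J1pt_u | auto].
  - intros j Hj. apply (smooth_fun_ext _ _ _ (fun z => P z j)); [intros z; apply J1pt_p | auto].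
Qed.

Lemma dmap_J1pt n (X : (nat -> R) -> nat -> R) u P z v X' u' P' :
  (forall j, (j < n)%nat -> dderiv (dimJ1 n) (fun y => X y j) z v (X' j)) ->
  dderiv (dimJ1 n) u z v u' ->
  (forall j, (j < n)%nat -> dderiv (dimJ1 n) (fun y => P y j) z v (P' j)) ->
  dmap (dimJ1 n) (dimJ1 n) (fun y => J1pt n (X y) (u y) (P y)) z v (J1pt n X' u' P').
Proof.
  intros Hx Hu Hp. apply dmap_dderiv.
  apply (J1_index_ind n (fun a => dderiv _ (fun y => J1pt n (X y) (u y) (P y) a) z v (J1pt n X' u' P' a))).
  - intros j Hj. rewrite J1pt_x by auto.
    apply (dderiv_ext _ _ (fun y => X y j)); [intros y; now apply J1pt_x | auto].
  - rewrite J1pt_u. apply (dderiv_ext _ _ u); [intros y; apply J1pt_u | auto].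
  - intros j Hj. rewrite J1pt_p.
    apply (dderiv_ext _ _ (fun y => P y j)); [intros y; apply J1pt_p | auto].
Qed.

(** The tangent vector with [dx = X], [du_i = P] lying in the contact distribution. *)
Definition contact_vec (n : nat) (z X P : nat -> R) : nat -> R :=
  J1pt n X (sumR n (fun j => X j * z (n + 1 + j)%nat)) P.

Lemma Evec_contact_vec n z U i :
  (i < n)%nat -> eqv (dimJ1 n) (Evec n z U i) (contact_vec n z (kron i) (U i)).
Proof.
  intros Hi. apply eqv_J1pt. unfold Evec. repeat split.
  - intros j Hj. rewrite (proj2 (Nat.ltb_lt j n) Hj). apply kron_sym.
  - rewrite Nat.ltb_irrefl, Nat.eqb_refl. symmetry.
    exact (sumR_kron_l n i (fun j => z (n + 1 + j)%nat) Hi).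
  - intros j Hj.
    rewrite (proj2 (Nat.ltb_ge (n + 1 + j) n)), (proj2 (Nat.eqb_neq (n + 1 + j) n)),
      (proj2 (Nat.ltb_lt (n + 1 + j) (2 * n + 1))) by lia.
    f_equal. lia.
Qed.

Lemma contact_vec_lincomb n z c X P :
  eqv (dimJ1 n) (fun a => sumR n (fun j => c j * contact_vec n z (X j) (P j) a))
                (contact_vec n z (vmul n c X) (vmul n c P)).
Proof.
  apply eqv_J1pt. unfold contact_vec. repeat split.
  - intros m Hm. apply sumR_ext. intros j _. now rewrite J1pt_x.
  - rewrite (sumR_ext n _ (fun j => sumR n (fun m => c j * X j m * z (n + 1 + m)%nat))).
    + rewrite sumR_swap. apply sumR_ext. intros m _. apply sumR_mulr.
    + intros j _. rewrite J1pt_u, <- sumR_mull. apply sumR_ext. intros; ring.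
  - intros m Hm. apply sumR_ext. intros j _. now rewrite J1pt_p.
Qed.

Lemma contact_vec_inj n z z' X P X' P' :
  eqv (dimJ1 n) (contact_vec n z X P) (contact_vec n z' X' P') ->
  (forall j, (j < n)%nat -> X j = X' j) /\ (forall j, (j < n)%nat -> P j = P' j).
Proof.
  unfold contact_vec. intros (Hx & _ & Hp)%eqv_J1pt. split.
  - intros j Hj. rewrite <- Hx, J1pt_x; auto.
  - intros j Hj. rewrite <- Hp, J1pt_p; auto.
Qed.

Lemma eqv_sym m x y : eqv m x y -> eqv m y x.
Proof. intros H a Ha. symmetry. auto. Qed.

Lemma eqv_trans m x y w : eqv m x y -> eqv m y w -> eqv m x w.
Proof. intros H1 H2 a Ha. rewrite H1; auto. Qed.

Lemma contact_vec_eqv n z X X' P P' :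
  (forall j, (j < n)%nat -> X j = X' j) -> (forall j, (j < n)%nat -> P j = P' j) ->
  eqv (dimJ1 n) (contact_vec n z X P) (contact_vec n z X' P').
Proof.
  intros HX HP. apply eqv_J1pt. unfold contact_vec. repeat split.
  - intros j Hj. rewrite J1pt_x; auto.
  - rewrite J1pt_u. apply sumR_ext. intros j Hj. now rewrite HX.
  - intros j Hj. rewrite J1pt_p; auto.
Qed.

Lemma lincomb_Evec n z U c :
  eqv (dimJ1 n) (fun a => sumR n (fun j => c j * Evec n z U j a)) (contact_vec n z c (vmul n c U)).
Proof.
  eapply eqv_trans; [|eapply eqv_trans; [apply contact_vec_lincomb|]].
  - intros a Ha. apply sumR_ext. intros j Hj. f_equal. now apply Evec_contact_vec.
  - apply contact_vec_eqv; [|reflexivity]. intros j Hj. apply sumR_kron_r, Hj.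
Qed.

Section Legendre.
Variables (r : nat -> bool) (n : nat).

(** Partial Legendre transformation in the variables [x^j], [j] in [r]:
    [x^j -> e u_j], [u_j -> - e x^j], [u -> u - sum_(j in r) x^j u_j]; [e = 1] gives the
    transformation, [e = -1] its inverse. *)
Definition legendre_map (e : R) (z : nat -> R) : nat -> R :=
  J1pt n (fun j => if r j then e * z (n + 1 + j)%nat else z j)
         (z n - sumR n (fun j => if r j then z j * z (n + 1 + j)%nat else 0))
         (fun j => if r j then - e * z j else z (n + 1 + j)%nat).

Definition dlegendre (z v : nat -> R) : nat -> R :=
  J1pt n (fun j => if r j then v (n + 1 + j)%nat else v j)
         (v n - sumR n (fun j => if r j then v j * z (n + 1 + j)%nat + z j * v (n + 1 + j)%nat else 0))
         (fun j => if r j then - v j else v (n + 1 + j)%nat).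

Lemma legendre_map_x e z j :
  (j < n)%nat -> legendre_map e z j = if r j then e * z (n + 1 + j)%nat else z j.
Proof. apply J1pt_x. Qed.

Lemma legendre_map_p e z j :
  legendre_map e z (n + 1 + j)%nat = if r j then - e * z j else z (n + 1 + j)%nat.
Proof. apply J1pt_p. Qed.

Lemma legendre_map_smooth e O : smooth_map (dimJ1 n) (dimJ1 n) O (legendre_map e).
Proof.
  assert (Hdim : forall j, (j < n)%nat -> (j < dimJ1 n)%nat /\ (n + 1 + j < dimJ1 n)%nat)
    by (unfold dimJ1; lia).
  apply smooth_map_J1pt.
  - intros j Hj. destruct (r j).
    + apply smooth_fun_scale, smooth_fun_coord, Hdim, Hj.
    + apply smooth_fun_coord, Hdim, Hj.
  - unfold Rminus. apply smooth_fun_add.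
    + apply smooth_fun_coord. unfold dimJ1; lia.
    + apply (smooth_fun_ext _ _ _ (fun z => -1 * sumR n (fun j => if r j then z j * z (n + 1 + j)%nat else 0)));
        [intros; ring|].
      apply smooth_fun_scale, smooth_fun_sumR. intros j Hj. destruct (r j).
      * apply smooth_fun_coord_mul; apply Hdim, Hj.
      * apply smooth_fun_const.
  - intros j Hj. destruct (r j).
    + apply smooth_fun_scale, smooth_fun_coord, Hdim, Hj.
    + apply smooth_fun_coord, Hdim, Hj.
Qed.

Lemma legendre_map_involutive e z :
  e * e = 1 -> eqv (dimJ1 n) (legendre_map (- e) (legendre_map e z)) z.
Proof.
  intros He a Ha. symmetry. revert a Ha. apply eqv_J1pt. repeat split.
  - intros j Hj. rewrite (legendre_map_x e z j Hj), legendre_map_p.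
    destruct (r j); [|reflexivity]. rewrite <- (Rmult_1_l (z j)) at 1. rewrite <- He. ring.
  - unfold legendre_map at 1. rewrite J1pt_u.
    rewrite (sumR_ext n (fun j => if r j then legendre_map e z j * _ else 0)
               (fun j => - (if r j then z j * z (n + 1 + j)%nat else 0))).
    + rewrite sumR_opp. ring.
    + intros j Hj. rewrite (legendre_map_x e z j Hj), legendre_map_p. destruct (r j); [|ring].
      transitivity (- (e * e) * (z j * z (n + 1 + j)%nat)); [ring | rewrite He; ring].
  - intros j Hj. rewrite (legendre_map_x e z j Hj), legendre_map_p.
    destruct (r j); [|reflexivity]. rewrite <- (Rmult_1_l (z (n + 1 + j)%nat)) at 1.
    rewrite <- He. ring.
Qed.

Lemma dmap_legendre z v : dmap (dimJ1 n) (dimJ1 n) (legendre_map 1) z v (dlegendre z v).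
Proof.
  assert (Hdim : forall j, (j < n)%nat -> (j < dimJ1 n)%nat /\ (n + 1 + j < dimJ1 n)%nat)
    by (unfold dimJ1; lia).
  apply dmap_J1pt.
  - intros j Hj. destruct (r j).
    + apply (dderiv_ext _ _ (fun y => y (n + 1 + j)%nat)); [intros; ring|].
      apply dderiv_coord, Hdim, Hj.
    + apply dderiv_coord, Hdim, Hj.
  - unfold Rminus. apply dderiv_add; [apply dderiv_coord; unfold dimJ1; lia|].
    apply dderiv_opp, dderiv_sumR. intros j Hj. destruct (r j).
    + apply dderiv_mul; apply dderiv_coord, Hdim, Hj.
    + apply dderiv_const.
  - intros j Hj. destruct (r j).
    + apply (dderiv_ext _ _ (fun y => - y j)); [intros; ring|].
      apply dderiv_opp, dderiv_coord, Hdim, Hj.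
    + apply dderiv_coord, Hdim, Hj.
Qed.

Lemma theta_legendre z v : theta n (legendre_map 1 z) (dlegendre z v) = theta n z v.
Proof.
  unfold theta.
  set (A := sumR n (fun j => if r j then v j * z (n + 1 + j)%nat + z j * v (n + 1 + j)%nat else 0)).
  assert (Hu : dlegendre z v n = v n - A) by apply J1pt_u.
  enough (E : A + sumR n (fun i => legendre_map 1 z (n + 1 + i)%nat * dlegendre z v i)
              = sumR n (fun i => z (n + 1 + i)%nat * v i)) by (rewrite Hu; lra).
  unfold A. rewrite <- sumR_add. apply sumR_ext. intros i Hi.
  rewrite legendre_map_p. unfold dlegendre. rewrite J1pt_x by auto. destruct (r i); ring.
Qed.

Lemma legendre_local_contact : local_contact n (fun _ => True) (legendre_map 1).
Proof.
  assert (Hopen : open_in (dimJ1 n) (fun _ => True)) by (intros x _; exists 1; split; [lra | auto]).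
  split; [exact Hopen|]. split; [apply legendre_map_smooth|]. split.
  - exists (fun _ => True), (legendre_map (-1)).
    split; [exact Hopen|]. split; [apply legendre_map_smooth|].
    split; intros z _; split; auto.
    + apply legendre_map_involutive. ring.
    + rewrite <- (Ropp_involutive 1) at 1. apply legendre_map_involutive. ring.
  - intros z v w _ Hv Hw.
    rewrite <- Hv, <- (theta_legendre z v). unfold theta.
    pose proof (dmap_unique _ _ _ _ _ _ _ Hw (dmap_legendre z v)) as E. unfold dimJ1 in E.
    rewrite E by lia. f_equal. apply sumR_ext. intros i Hi. rewrite E by lia. reflexivity.
Qed.

Definition swapx (X P : nat -> R) (j : nat) : R := if r j then P j else X j.
Definition swapp (X P : nat -> R) (j : nat) : R := if r j then - X j else P j.

Lemma dlegendre_contact_vec z X P :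
  eqv (dimJ1 n) (dlegendre z (contact_vec n z X P))
                (contact_vec n (legendre_map 1 z) (swapx X P) (swapp X P)).
Proof.
  unfold dlegendre, contact_vec at 2. apply eqv_J1pt. repeat split.
  - intros j Hj. rewrite J1pt_x by auto. unfold contact_vec, swapx.
    destruct (r j); [apply J1pt_p | now apply J1pt_x].
  - rewrite J1pt_u. unfold contact_vec. rewrite J1pt_u.
    rewrite (sumR_ext n (fun j => if r j then _ else 0)
               (fun j => if r j then X j * z (n + 1 + j)%nat + z j * P j else 0)).
    2:{ intros j Hj. destruct (r j); [|reflexivity]. now rewrite J1pt_x, J1pt_p. }
    unfold Rminus. rewrite <- sumR_opp, <- sumR_add. apply sumR_ext. intros j Hj.
    rewrite legendre_map_p. unfold swapx. destruct (r j); ring.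
  - intros j Hj. rewrite J1pt_p. unfold contact_vec, swapp.
    destruct (r j); [now rewrite J1pt_x | apply J1pt_p].
Qed.

Lemma dlegendre_eqv z v v' :
  eqv (dimJ1 n) v v' -> eqv (dimJ1 n) (dlegendre z v) (dlegendre z v').
Proof.
  intros H. assert (Hx : forall j, (j < n)%nat -> v j = v' j /\ v (n + 1 + j)%nat = v' (n + 1 + j)%nat)
    by (intros j Hj; split; apply H; unfold dimJ1; lia).
  unfold dlegendre at 2. apply eqv_J1pt. unfold dlegendre. repeat split.
  - intros j Hj. rewrite J1pt_x by auto. destruct (Hx j Hj) as [-> ->]. reflexivity.
  - rewrite J1pt_u, (H n) by (unfold dimJ1; lia). f_equal. apply sumR_ext. intros j Hj.
    destruct (Hx j Hj) as [-> ->]. reflexivity.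
  - intros j Hj. rewrite J1pt_p. destruct (Hx j Hj) as [-> ->]. reflexivity.
Qed.

End Legendre.

(** The image under the Legendre transformation of the plane spanned by the rows
    of [(1, U)] is spanned by the rows of [(legM, legN)]. *)
Definition legM (r : nat -> bool) (U : nat -> nat -> R) (i : nat) : nat -> R :=
  swapx r (kron i) (U i).
Definition legN (r : nat -> bool) (U : nat -> nat -> R) (i : nat) : nat -> R :=
  swapp r (kron i) (U i).

Section Prolongation.
Variables (r : nat -> bool) (n : nat) (z : nat -> R) (U : nat -> nat -> R).

Lemma dlegendre_Evec i : (i < n)%nat ->
  eqv (dimJ1 n) (dlegendre r n z (Evec n z U i))
                (contact_vec n (legendre_map r n 1 z) (legM r U i) (legN r U i)).
Proof.
  intros Hi. eapply eqv_trans; [apply dlegendre_eqv, Evec_contact_vec, Hi|].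
  apply dlegendre_contact_vec.
Qed.

Lemma lincomb_dlegendre_Evec c :
  eqv (dimJ1 n) (fun a => sumR n (fun j => c j * dlegendre r n z (Evec n z U j) a))
                (contact_vec n (legendre_map r n 1 z) (vmul n c (legM r U)) (vmul n c (legN r U))).
Proof.
  eapply eqv_trans; [|apply contact_vec_lincomb].
  intros a Ha. apply sumR_ext. intros j Hj. f_equal. now apply dlegendre_Evec.
Qed.

Lemma prolong_legendre_graph P' : prolong n (legendre_map r n 1) (z, U) P' ->
  forall i m, (i < n)%nat -> (m < n)%nat -> vmul n (legM r U i) (snd P') m = legN r U i m.
Proof.
  destruct P' as [z' U']. intros (_ & _ & A & HA & Hspan & _) i m Hi Hm. simpl in *.
  destruct (Hspan i Hi) as [c Hc].
  assert (E : eqv (dimJ1 n) (contact_vec n (legendre_map r n 1 z) (legM r U i) (legN r U i))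
                            (contact_vec n z' c (vmul n c U'))).
  { eapply eqv_trans; [apply eqv_sym, dlegendre_Evec, Hi|].
    eapply eqv_trans; [apply (dmap_unique _ _ _ _ _ _ _ (dmap_legendre r n z _) (HA i Hi))|].
    eapply eqv_trans; [exact Hc | apply lincomb_Evec]. }
  destruct (contact_vec_inj _ _ _ _ _ _ _ E) as [HX HP].
  rewrite HP by exact Hm. apply vmul_ext. intros j Hj. auto.
Qed.

Lemma prolong_legendre_intro U' C : sym n U' ->
  (forall i a, (i < n)%nat -> (a < n)%nat -> vmul n (C i) (legM r U) a = kron i a) ->
  (forall i m, (i < n)%nat -> (m < n)%nat -> vmul n (legM r U i) U' m = legN r U i m) ->
  prolong n (legendre_map r n 1) (z, U) (legendre_map r n 1 z, U').
Proof.
  intros Hsym HC Hgraph. split; [exact Hsym|]. split; [intros a _; reflexivity|].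
  exists (fun i => dlegendre r n z (Evec n z U i)). simpl.
  split; [intros i _; apply dmap_legendre|]. split.
  - intros i Hi. exists (legM r U i).
    eapply eqv_trans; [apply dlegendre_Evec, Hi|].
    eapply eqv_trans; [|apply eqv_sym, lincomb_Evec].
    apply contact_vec_eqv; [reflexivity|]. intros m Hm. symmetry. auto.
  - intros i Hi. exists (C i).
    eapply eqv_trans; [apply Evec_contact_vec, Hi|].
    eapply eqv_trans; [|apply eqv_sym, lincomb_dlegendre_Evec].
    apply contact_vec_eqv.
    + intros a Ha. symmetry. auto.
    + intros m Hm. symmetry.
      transitivity (vmul n (C i) (fun j => vmul n (legM r U j) U') m).
      { apply vmul_ext. intros j Hj. split; [reflexivity | symmetry; auto]. }
      rewrite <- vmul_assoc. transitivity (vmul n (kron i) U' m).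
      { apply vmul_ext. intros j Hj. split; [auto | reflexivity]. }
      apply vmul_kron, Hi.
Qed.

End Prolongation.

Definition nonzero_vec (m : nat) (f : nat -> R) : Prop := ~ (forall a, (a < m)%nat -> f a = 0).

Definition degenerate (n k : nat) (U : nat -> nat -> R) : Prop :=
  exists f, nonzero_vec n f /\ (forall j, (k <= j < n)%nat -> f j = 0) /\
            (forall j, (j < k)%nat -> vmul n f U j = 0).

Definition inverse_pair (n : nat) (C M : nat -> nat -> R) : Prop :=
  (forall i a, (i < n)%nat -> (a < n)%nat -> vmul n (C i) M a = kron i a) /\
  (forall i a, (i < n)%nat -> (a < n)%nat -> vmul n (M i) C a = kron i a).

Definition swap_range (k l j : nat) : bool := (Nat.min k l <=? j) && (j <? Nat.max k l).

Lemma swap_range_spec k l j : swap_range k l j = true <-> (Nat.min k l <= j < Nat.max k l)%nat.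
Proof. unfold swap_range. rewrite Bool.andb_true_iff, Nat.leb_le, Nat.ltb_lt. reflexivity. Qed.

Lemma swap_range_spec_false k l j :
  swap_range k l j = false -> ~ (Nat.min k l <= j < Nat.max k l)%nat.
Proof. rewrite <- swap_range_spec. congruence. Qed.

Lemma vmul_legM r n U f j : (j < n)%nat -> vmul n f (legM r U) j = swapx r f (vmul n f U) j.
Proof.
  intros Hj. unfold vmul at 1, legM, swapx. destruct (r j); [reflexivity|].
  exact (sumR_kron_r n j f Hj).
Qed.

Lemma vmul_legN r n U f j : (j < n)%nat -> vmul n f (legN r U) j = swapp r f (vmul n f U) j.
Proof.
  intros Hj. unfold vmul at 1, legN, swapp. destruct (r j); [|reflexivity].
  rewrite <- (sumR_kron_r n j f Hj), <- sumR_opp. apply sumR_ext. intros; ring.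
Qed.

Lemma swap_vanishing k l n a b : (k <= n)%nat -> (l <= n)%nat ->
  ((forall j, (k <= j < n)%nat -> a j = 0) /\ (forall j, (j < k)%nat -> b j = 0)) <->
  ((forall j, (l <= j < n)%nat -> swapx (swap_range k l) a b j = 0) /\
   (forall j, (j < l)%nat -> swapp (swap_range k l) a b j = 0)).
Proof.
  intros Hk Hl. unfold swapx, swapp.
  split; intros [Ha Hb]; split; intros j Hj; specialize (Ha j); specialize (Hb j);
    destruct (swap_range k l j) eqn:Hr;
    first [apply swap_range_spec in Hr | apply swap_range_spec_false in Hr].
  - apply Hb. lia.
  - apply Ha. lia.
  - rewrite Ha by lia. ring.
  - apply Hb. lia.
  - specialize (Hb ltac:(lia)). lra.
  - apply Ha. lia.
  - apply Ha. lia.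
  - apply Hb. lia.
Qed.

Lemma vmul_zero n f A j : (forall a, (a < n)%nat -> f a = 0) -> vmul n f A j = 0.
Proof.
  intros H. unfold vmul. rewrite <- (sumR_0 n). apply sumR_ext. intros i Hi. rewrite H; auto. ring.
Qed.

Lemma vmul_identity n f (A : nat -> nat -> R) j : (j < n)%nat ->
  (forall i, (i < n)%nat -> A i j = kron i j) -> vmul n f A j = f j.
Proof.
  intros Hj H. rewrite <- (sumR_kron_r n j f Hj). apply sumR_ext. intros i Hi. now rewrite H.
Qed.

Lemma vmul_inverse n C M f a : (a < n)%nat ->
  (forall i, (i < n)%nat -> vmul n (M i) C a = kron i a) -> vmul n (vmul n f M) C a = f a.
Proof. intros Ha H. rewrite vmul_assoc. apply vmul_identity; auto. Qed.

Lemma degenerate_legendre k l n U U' C : (k <= n)%nat -> (l <= n)%nat ->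
  inverse_pair n C (legM (swap_range k l) U) ->
  (forall i m, (i < n)%nat -> (m < n)%nat ->
     vmul n (legM (swap_range k l) U i) U' m = legN (swap_range k l) U i m) ->
  degenerate n k U <-> degenerate n l U'.
Proof.
  intros Hk Hl [HCM HMC] Hgraph. set (r := swap_range k l) in *.
  assert (Himage : forall f j, (j < n)%nat ->
            vmul n (vmul n f (legM r U)) U' j = swapp r f (vmul n f U) j).
  { intros f j Hj. rewrite vmul_assoc, <- vmul_legN by exact Hj.
    apply vmul_ext. intros i Hi. split; [reflexivity | auto]. }
  split.
  - intros (f & Hnz & Hx & Hp).
    destruct (proj1 (swap_vanishing k l n f (vmul n f U) Hk Hl) (conj Hx Hp)) as [Vx Vp].
    exists (vmul n f (legM r U)). split; [|split].
    + intros H0. apply Hnz. intros a Ha. rewrite <- (vmul_inverse n C (legM r U) f a Ha).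
      * now apply vmul_zero.
      * intros; auto.
    + intros j Hj. rewrite vmul_legM by lia. auto.
    + intros j Hj. rewrite Himage by lia. auto.
  - intros (g & Hnz & Hx & Hp). set (f := vmul n g C).
    assert (Hg : forall j, (j < n)%nat -> vmul n f (legM r U) j = g j)
      by (intros j Hj; apply vmul_inverse; auto).
    assert (Hvan := proj2 (swap_vanishing k l n f (vmul n f U) Hk Hl)).
    exists f. split; [|apply Hvan; split].
    + intros H0. apply Hnz. intros a Ha. rewrite <- Hg by exact Ha. now apply vmul_zero.
    + intros j Hj. rewrite <- vmul_legM, Hg by lia. apply Hx, Hj.
    + intros j Hj. rewrite <- Himage by lia. transitivity (vmul n g U' j); [|exact (Hp j Hj)].
      apply vmul_ext. intros i Hi. split; [apply Hg, Hi | reflexivity].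
Qed.

Definition trm (A : nat -> nat -> R) (i j : nat) : R := A j i.

Module MatrixBridge.
Import ssreflect ssrfun ssrbool eqtype ssrnat seq choice fintype bigop.
Import all_algebra Rstruct GRing.Theory.
Local Open Scope ring_scope.
Local Open Scope R_scope.

Definition mx n (F : nat -> nat -> R) : 'M[R]_n := \matrix_(i < n, j < n) F i j.

Definition of_mx {n} (A : 'M[R]_n) (i j : nat) : R :=
  match insub i, insub j with Some i', Some j' => A i' j' | _, _ => 0 end.

Definition of_rv {n} (v : 'rV[R]_n) (j : nat) : R :=
  match insub j with Some j' => v ord0 j' | None => 0 end.

Lemma of_mxE n (A : 'M[R]_n) (i j : 'I_n) : of_mx A i j = A i j.
Proof. by rewrite /of_mx !valK. Qed.

Lemma of_rvE n (v : 'rV[R]_n) (j : 'I_n) : of_rv v j = v ord0 j.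
Proof. by rewrite /of_rv valK. Qed.

Lemma sumR_big m f : sumR m f = \sum_(i < m) f i.
Proof. elim: m => [|m IH]; first by rewrite big_ord0. by rewrite big_ord_recr /= IH. Qed.

Lemma vmul_mx n c F (j : 'I_n) : vmul n c F j = (\row_(i < n) c i *m mx n F) ord0 j.
Proof. rewrite /vmul sumR_big !mxE. apply: eq_bigr => i _. by rewrite !mxE. Qed.

Lemma mx_vmul n A B : mx n (fun i => vmul n (A i) B) = mx n A *m mx n B.
Proof. apply/matrixP => i j. by rewrite mxE vmul_mx !mxE; apply: eq_bigr => p _; rewrite !mxE. Qed.

Lemma mx_ext n F G :
  (forall i j, (i < n)%coq_nat -> (j < n)%coq_nat -> F i j = G i j) -> mx n F = mx n G.
Proof. move=> H. apply/matrixP => i j. rewrite !mxE. by apply: H; apply/ltP. Qed.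

Lemma mx_kron n : mx n kron = 1%R%:M.
Proof.
  apply/matrixP => i j. rewrite !mxE /kron -val_eqE /=.
  by case: (Nat.eqb_spec i j) => [->|/eqP/negbTE ->]; rewrite ?eqxx.
Qed.

Lemma mx_trm n F : mx n (trm F) = (mx n F)^T.
Proof. apply/matrixP => i j. by rewrite !mxE. Qed.

Lemma m1pow j : (-1) ^ j = ((-1) ^+ j)%R.
Proof. elim: j => [|j IH] //=. by rewrite exprS IH. Qed.

Lemma detk_det k F : detk k F = \det (mx k F).
Proof.
  elim: k F => [|k IH] F; first by rewrite det_mx00.
  have -> : detk k.+1 F =
    sumR k.+1 (fun j => Rmult (Rmult (Rpow_def.pow (IZR (Zneg xH)) j) (F 0%N j)) (detk k (minor F j)))
    by [].
  rewrite (expand_det_row _ ord0) sumR_big. apply: eq_bigr => j _.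
  rewrite /cofactor IH mxE m1pow add0n.
  have -> : mx k (minor F j) = row' ord0 (col' j (mx k.+1 F)).
    apply/matrixP => a b. rewrite !mxE /minor /= /bump.
    have -> : Nat.ltb b j = (b < j)%N 
      by apply/idP/idP => [/Nat.ltb_lt/ltP | /ltP/Nat.ltb_lt].
    by case: (ltnP b j).
  by rewrite mulrCA mulrA.
Qed.

Lemma mx_of_mx n (A : 'M[R]_n) : mx n (of_mx A) = A.
Proof. apply/matrixP => i j. by rewrite mxE of_mxE. Qed.

Lemma mx_entry n F G i j : mx n F = mx n G -> (i < n)%coq_nat -> (j < n)%coq_nat -> F i j = G i j.
Proof.
  move=> E /ltP Hi /ltP Hj.
  by have := congr1 (fun A : 'M[R]_n => A (Ordinal Hi) (Ordinal Hj)) E; rewrite !mxE.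
Qed.

Lemma detk_eq0_iff k F :
  detk k F = 0 <-> exists f, nonzero_vec k f /\ forall j, (j < k)%coq_nat -> vmul k f F j = 0.
Proof.
  rewrite detk_det. split.
  - move=> /eqP/det0P [v Hv0 Hv]. exists (of_rv v). split.
    + move=> H0. move/eqP: Hv0; apply. apply/matrixP => i j.
      rewrite (ord1 i) mxE -of_rvE. by apply: H0; apply/ltP.
    + move=> j /ltP Hj. rewrite (vmul_mx _ _ _ (Ordinal Hj)).
      have -> : \row_(i < k) of_rv v i = v by apply/matrixP => a b; rewrite (ord1 a) mxE of_rvE.
      by rewrite Hv mxE.
  - move=> [f [Hnz Hf]]. apply/eqP/det0P. exists (\row_(i < k) f i).
    + apply/eqP => E. apply: Hnz => a /ltP Ha.
      by have := congr1 (fun v : 'rV[R]_k => v ord0 (Ordinal Ha)) E; rewrite !mxE.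
    + apply/matrixP => i j. rewrite (ord1 i) -vmul_mx mxE. by apply: Hf; apply/ltP.
Qed.

Lemma inverse_of_row_injective n M :
  (forall f, (forall j, (j < n)%coq_nat -> vmul n f M j = 0) ->
     forall a, (a < n)%coq_nat -> f a = 0) ->
  exists C, inverse_pair n C M.
Proof.
  move=> Hinj. have HM : mx n M \in unitmx.
    rewrite unitmxE unitfE -detk_det. apply/eqP => /detk_eq0_iff [f [Hnz Hf]].
    by apply: Hnz; apply: Hinj.
  set C := of_mx (invmx (mx n M)). exists C. split => i a Hi Ha.
  - apply: (@mx_entry n (fun i => vmul n (C i) M) kron) Hi Ha.
    by rewrite mx_vmul mx_of_mx mulVmx // mx_kron.
  - apply: (@mx_entry n (fun i => vmul n (M i) C) kron) Hi Ha.
    by rewrite mx_vmul mx_of_mx mulmxV // mx_kron.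
Qed.

Lemma sym_inverse_mul n C M N :
  (forall i a, (i < n)%coq_nat -> (a < n)%coq_nat -> vmul n (C i) M a = kron i a) ->
  (forall i k, (i < n)%coq_nat -> (k < n)%coq_nat -> vmul n (M i) (trm N) k = vmul n (N i) (trm M) k) ->
  sym n (fun i => vmul n (C i) N).
Proof.
  move=> HCM Hcomm.
  have eCM : mx n C *m mx n M = 1%R%:M by rewrite -mx_vmul -mx_kron; apply: mx_ext.
  have eMN : mx n M *m (mx n N)^T = mx n N *m (mx n M)^T
    by rewrite -!mx_trm -!mx_vmul; apply: mx_ext.
  have eS : mx n C *m mx n N = (mx n C *m mx n N)^T.
    rewrite -[LHS]mulmx1 -trmx1 -eCM trmx_mul mulmxA -(mulmxA _ (mx n N)) -eMN.
    by rewrite mulmxA eCM mul1mx trmx_mul.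
  move=> i j Hi Hj.
  apply: (@mx_entry n (fun i => vmul n (C i) N) (trm (fun i => vmul n (C i) N))) Hi Hj.
  by rewrite mx_trm mx_vmul.
Qed.
End MatrixBridge.

Lemma detk_eq0_degenerate n k U : (k <= n)%nat -> detk k U = 0 <-> degenerate n k U.
Proof.
  intros Hk. split.
  - intros (f & Hnz & Hf)%MatrixBridge.detk_eq0_iff.
    exists (fun i => if (i <? k)%nat then f i else 0). split; [|split].
    + intros H0. apply Hnz. intros a Ha. specialize (H0 a ltac:(lia)).
      now rewrite (proj2 (Nat.ltb_lt a k) Ha) in H0.
    + intros j Hj. now rewrite (proj2 (Nat.ltb_ge j k)) by lia.
    + intros j Hj. transitivity (vmul k f U j); [|exact (Hf j Hj)]. unfold vmul.
      rewrite (sumR_truncate n k)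
        by (exact Hk || intros i Hi; rewrite (proj2 (Nat.ltb_ge i k)) by lia; ring).
      apply sumR_ext. intros i Hi. now rewrite (proj2 (Nat.ltb_lt i k) Hi).
  - intros (f & Hnz & Hx & Hp). apply MatrixBridge.detk_eq0_iff. exists f. split.
    + intros H0. apply Hnz. intros a Ha. destruct (lt_dec a k); [auto | apply Hx; lia].
    + intros j Hj. transitivity (vmul n f U j); [|exact (Hp j Hj)]. unfold vmul. symmetry.
      apply sumR_truncate; [exact Hk|]. intros i Hi. rewrite Hx by lia. ring.
Qed.

Lemma legM_legN_comm r n U i k : sym n U -> (i < n)%nat -> (k < n)%nat ->
  vmul n (legM r U i) (trm (legN r U)) k = vmul n (legN r U i) (trm (legM r U)) k.
Proof.
  intros Hs Hi Hk. unfold vmul, trm, legM, legN, swapx, swapp.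
  rewrite (sumR_ext n _ (fun j => kron k j * (if r j then - U i j else 0)
                                 + kron i j * (if r j then 0 else U k j)))
    by (intros j _; destruct (r j); ring).
  rewrite (sumR_ext n (fun j => (if r j then - kron i j else U i j) * _)
             (fun j => kron i j * (if r j then - U k j else 0)
                       + kron k j * (if r j then 0 else U i j)))
    by (intros j _; destruct (r j); ring).
  rewrite !sumR_add.
  rewrite (sumR_kron_l n k (fun j => if r j then - U i j else 0) Hk),
          (sumR_kron_l n i (fun j => if r j then 0 else U k j) Hi),
          (sumR_kron_l n i (fun j => if r j then - U k j else 0) Hi),
          (sumR_kron_l n k (fun j => if r j then 0 else U i j) Hk).
  rewrite (Hs k i) by auto. destruct (r i), (r k); ring.
Qed.

Lemma row_injective_near_identity n A :
  (forall j, (j < n)%nat -> sumR n (fun i => Rabs (A i j - kron i j)) < 1) ->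
  forall f, (forall j, (j < n)%nat -> vmul n f A j = 0) -> forall a, (a < n)%nat -> f a = 0.
Proof.
  intros HA f Hf a Ha.
  destruct (exists_argmax n (fun i => Rabs (f i)) ltac:(lia)) as [b [Hb Hmax]].
  assert (Hfb : f b = - sumR n (fun i => f i * (A i b - kron i b))).
  { rewrite <- (Rminus_0_r (f b)), <- (Hf b Hb), <- (sumR_kron_r n b f Hb).
    unfold vmul. rewrite <- sumR_opp. unfold Rminus. rewrite <- sumR_opp, <- sumR_add.
    apply sumR_ext. intros; ring. }
  assert (Hbound : Rabs (f b) <= Rabs (f b) * sumR n (fun i => Rabs (A i b - kron i b))).
  { rewrite Hfb at 1. rewrite Rabs_Ropp. eapply Rle_trans; [apply sumR_abs|].
    rewrite <- sumR_mull. apply sumR_le. intros i Hi. rewrite Rabs_mult.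
    apply Rmult_le_compat_r; [apply Rabs_pos | auto]. }
  pose proof (HA b Hb). pose proof (Rabs_pos (f b)). pose proof (Hmax a Ha).
  assert (Rabs (f a) = 0) by (pose proof (Rabs_pos (f a)); nra).
  destruct (Req_dec (f a) 0) as [|Hne]; [assumption|]. pose proof (Rabs_pos_lt _ Hne). lra.
Qed.

(** [legM r (base_point r)] is the identity matrix. *)
Definition base_point (r : nat -> bool) (i j : nat) : R := if r j then kron i j else 0.

Definition near_base (r : nat -> bool) (n : nat) (U : nat -> nat -> R) : Prop :=
  sumR n (fun i => sumR n (fun j => Rabs (U i j - base_point r i j))) < 1 / 2.

Lemma legM_row_injective r n U : near_base r n U ->
  forall f, (forall j, (j < n)%nat -> vmul n f (legM r U) j = 0) ->
  forall a, (a < n)%nat -> f a = 0.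
Proof.
  intros Hnear. unfold near_base in Hnear. apply row_injective_near_identity. intros j Hj.
  eapply Rle_lt_trans; [|apply (Rlt_trans _ _ _ Hnear); lra].
  apply sumR_le. intros i Hi.
  eapply Rle_trans; [|apply (sumR_term_le n (fun j => Rabs (U i j - base_point r i j)) j)];
    [| intros; apply Rabs_pos | exact Hj].
  unfold legM, swapx, base_point. destruct (r j); [apply Rle_refl|].
  rewrite Rminus_diag, Rabs_R0. apply Rabs_pos.
Qed.

Lemma base_point_sym r n : sym n (base_point r).
Proof.
  intros i j _ _. unfold base_point, kron. rewrite (Nat.eqb_sym j i).
  destruct (Nat.eqb_spec i j) as [->|]; [reflexivity|]. now destruct (r i), (r j).
Qed.

Lemma base_point_near r n : near_base r n (base_point r).
Proof.
  unfold near_base. rewrite (sumR_ext n _ (fun _ => 0)), sumR_0; [lra|].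
  intros i _. rewrite <- (sumR_0 n). apply sumR_ext. intros j _.
  rewrite Rminus_diag. apply Rabs_R0.
Qed.

Lemma detk_base_point r k : (1 <= k)%nat -> r 0%nat = false -> detk k (base_point r) = 0.
Proof.
  intros Hk Hr0. destruct k as [|k]; [lia|]. cbn [detk].
  rewrite <- (sumR_0 (S k)). apply sumR_ext. intros j _. unfold base_point, kron.
  destruct (Nat.eqb_spec 0 j) as [<-|]; [rewrite Hr0 | destruct (r j)]; ring.
Qed.

Lemma near_base_open r n : open_J2 n (fun P => sym n (snd P) /\ near_base r n (snd P)).
Proof.
  intros [z U] [Hs Hnear]. split; [exact Hs|]. simpl in *. unfold near_base in *.
  set (S := sumR n (fun i => sumR n (fun j => Rabs (U i j - base_point r i j)))) in *.
  assert (HS : 0 <= S) by (apply sumR_nonneg; intros; apply sumR_nonneg; intros; apply Rabs_pos).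
  pose proof (pos_INR n) as Hn.
  set (eps := (1 / 2 - S) / (INR n * INR n + 1)).
  assert (Heps : 0 < eps) by (unfold eps; apply Rdiv_lt_0_compat; nra).
  exists eps. split; [exact Heps|]. intros [z' U'] Hs' _ HU. split; [exact Hs'|]. simpl in *.
  apply Rle_lt_trans with
    (sumR n (fun i => sumR n (fun j => Rabs (U' i j - U i j))) + S).
  { unfold S. rewrite <- sumR_add. apply sumR_le. intros i Hi. rewrite <- sumR_add.
    apply sumR_le. intros j Hj.
    replace (U' i j - base_point r i j) with ((U' i j - U i j) + (U i j - base_point r i j)) by ring.
    apply Rabs_triang. }
  assert (sumR n (fun i => sumR n (fun j => Rabs (U' i j - U i j))) <= INR n * (INR n * eps)).
  { apply sumR_le_const. intros i Hi. apply sumR_le_const. intros j Hj. left. auto. }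
  assert (INR n * (INR n * eps) < 1 / 2 - S).
  { assert (E : eps * (INR n * INR n + 1) = 1 / 2 - S) by (unfold eps; field; nra). nra. }
  lra.
Qed.

Section LegendreProlongation.
Variables (r : nat -> bool) (n : nat) (z : nat -> R) (U : nat -> nat -> R).
Hypothesis Hnear : near_base r n U.

Lemma prolong_legendre_exists :
  sym n U -> exists P', prolong n (legendre_map r n 1) (z, U) P'.
Proof.
  intros Hs. destruct (MatrixBridge.inverse_of_row_injective n (legM r U) (legM_row_injective r n U Hnear))
    as [C [HCM HMC]].
  set (U' := fun i => vmul n (C i) (legN r U)).
  exists (legendre_map r n 1 z, U'). apply prolong_legendre_intro with C.
  - apply MatrixBridge.sym_inverse_mul with (legM r U); [exact HCM|].
    intros i k Hi Hk. now apply legM_legN_comm.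
  - exact HCM.
  - intros i m Hi Hm. unfold U'. rewrite <- vmul_assoc.
    transitivity (vmul n (kron i) (legN r U) m); [|now apply vmul_kron].
    apply vmul_ext. intros j Hj. split; [auto | reflexivity].
Qed.

Lemma prolong_legendre_detk k l P' : r = swap_range k l -> (k <= n)%nat -> (l <= n)%nat ->
  prolong n (legendre_map r n 1) (z, U) P' -> (detk k U = 0 <-> detk l (snd P') = 0).
Proof.
  intros -> Hk Hl HP.
  destruct (MatrixBridge.inverse_of_row_injective n (legM _ U) (legM_row_injective _ n U Hnear))
    as [C HC].
  rewrite (detk_eq0_degenerate n k), (detk_eq0_degenerate n l) by assumption.
  apply (degenerate_legendre k l n U (snd P') C Hk Hl HC).
  now apply (prolong_legendre_graph _ n z U P').
Qed.

End LegendreProlongation.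

Theorem corollary9p3 (n k l : nat) :
  (1 <= n)%nat -> (1 <= k <= n)%nat -> (1 <= l <= n)%nat ->
  exists (O : (nat -> R) -> Prop) (phi : (nat -> R) -> (nat -> R)) (W : J2pt -> Prop),
    local_contact n O phi /\
    open_J2 n W /\
    (forall P, W P -> O (fst P)) /\
    (forall P, W P -> exists P', prolong n phi P P') /\
    (forall P P', W P -> prolong n phi P P' ->
       (detk k (snd P) = 0 <-> detk l (snd P') = 0)) /\
    (exists P, W P /\ detk k (snd P) = 0).
Proof.
  intros _ Hk Hl. set (r := swap_range k l).
  exists (fun _ => True), (legendre_map r n 1),
         (fun P => sym n (snd P) /\ near_base r n (snd P)).
  split; [apply legendre_local_contact|].
  split; [apply near_base_open|].
  split; [auto|].
  split; [intros [z U] [Hs Hnear]; now apply prolong_legendre_exists|].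
  split.
  - intros [z U] P' [_ Hnear] HP. apply (prolong_legendre_detk r n z U Hnear); auto; lia.
  - exists ((fun _ => 0), base_point r).
    split; [split; [apply base_point_sym | apply base_point_near]|].
    apply detk_base_point; [lia|]. apply Bool.not_true_iff_false. unfold r. rewrite swap_range_spec. lia.
Qed.
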